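(* Let $R$ be a unital ring and let $(P,Q,\psi)$ be a unital $R$-system satisfying Condition (FS'). Let $\mathcal{T}_{(P,Q,\psi)}=\bigoplus_i\mathcal{T}_i$ be its Toeplitz ring, and define $\epsilon_0=\iota_R(1_R)$ and, for $i>0$, $\epsilon_i=\pi_{\iota_Q^i,\iota_P^i}(\mathrm{id}_{Q^{\otimes i}})\in\mathcal{T}_i\mathcal{T}_{-i}$. Then for every $i\ge0$: $\epsilon_is=s$ for all $s\in\mathcal{T}_i$, and $t\epsilon_i=t$ for all $t\in\mathcal{T}_{-i}$. Consequently $\mathcal{T}_i\mathcal{T}_{-i}$ is a unital ideal of $\mathcal{T}_0$ with multiplicative identity $\epsilon_i$, for every $i\ge0$.
   Context: For additive subsets $X,Y$ of a ring, $XY$ is the additive subgroup generated by products. An $R$-system is a triple $(P,Q,\psi)$ with $P,Q$ $R$-bimodules and $\psi:P\otimes_RQ\to R$ an $R$-bimodule homomorphism; it is unital if $R$ is unital and $1_R$ acts as identity on both sides of $P$ and $Q$. Put $P^{\otimes0}=Q^{\otimes0}=R$, $\psi_0(r\otimes r')=rr'$, $\psi_1=\psi$, and for $n>1$: $Q^{\otimes n}=Q^{\otimes(n-1)}\otimes_RQ$, $P^{\otimes n}=P\otimes_RP^{\otimes(n-1)}$, $\psi_n((p_1\otimes p_2)\otimes(q_2\otimes q_1))=\psi(p_1\psi_{n-1}(p_2\otimes q_2)\otimes q_1)$; $(P^{\otimes n},Q^{\otimes n},\psi_n)$ is again an $R$-system. For an $R$-system $(P,Q,\psi)$ and $q\in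 Q,p\in P$ let $\theta_{q,p}(x)=q\psi(p\otimes x)$ ($x\in Q$), $\theta_{p,q}(y)=\psi(y\otimes q)p$ ($y\in P$); $\mathcal{F}_P(Q)$, $\mathcal{F}_Q(P)$ are the additive groups generated by these maps. Condition (FS'): there exist $\Theta\in\mathcal{F}_P(Q)$, $\Phi\in\mathcal{F}_Q(P)$ with $\Theta(q)=q$, $\Phi(p)=p$ for all $q,p$. If $(P,Q,\psi)$ satisfies (FS'), so does each $(P^{\otimes n},Q^{\otimes n},\psi_n)$, and $\mathrm{id}_{Q^{\otimes n}}\in\mathcal{F}_{P^{\otimes n}}(Q^{\otimes n})$ in the unital case. A covariant representation of $(P,Q,\psi)$ is a tuple $(S,T,\sigma,B)$ with $B$ a ring, $S:P\to B$, $T:Q\to B$ additive maps, $\sigma:R\to B$ a ring homomorphism, with $S(pr)=S(p)\sigma(r)$, $S(rp)=\sigma(r)S(p)$, $T(qr)=T(q)\sigma(r)$, $T(rq)=\sigma(r)T(q)$, $\sigma(\psi(p\otimes q))=S(p)T(q)$; then with $S^n(p_1\otimes\cdots\otimes p_n)=S(p_1)\cdots S(p_n)$, $T^n(q_1\otimes\cdots\otimes q_n)=T(q_1)\cdots T(q_n)$, $(S^n,T^n,\sigma,B)$ is a covariant representation of $(P^{\otimes n},Q^{\otimes n},\psi_n)$, and there is a unique ring homomorphism $\pi_{T^n,S^n}:\mathcal{F}_{P^{\otimes n}}(Q^{\otimes n})\to B$ with $\pi_{T^n,S^n}(\theta_{q,p})=T^n(q)S^n(p)$. The Toeplitz representation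 $(\iota_P,\iota_Q,\iota_R,\mathcal{T}_{(P,Q,\psi)})$ is the universal covariant representation; its $\mathbb{Z}$-grading is $\mathcal{T}_i$ = additive group generated by the elements $\iota_Q^m(q)\iota_P^n(p)$ and $\iota_R(r)\iota_Q^m(q)\iota_P^n(p)$ for $q\in Q^{\otimes m}$, $p\in P^{\otimes n}$, $m-n=i$ (with $\iota^0=\iota_R$). *)

From HB Require Import structures.
From mathcomp Require Import all_boot all_order all_algebra.
Set Implicit Arguments. Unset Strict Implicit. Unset Printing Implicit Defensive.
Import GRing.Theory.
Local Open Scope ring_scope.

Record bimod (R : pzRingType) := Bimod {
  bm_car :> zmodType;
  bm_l : R -> bm_car -> bm_car;
  bm_r : bm_car -> R -> bm_car;
  bm_lD : forall r (x y : bm_car), bm_l r (x + y) = bm_l r x + bm_l r y;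
  bm_Dl : forall r s (x : bm_car), bm_l (r + s) x = bm_l r x + bm_l s x;
  bm_lM : forall r s (x : bm_car), bm_l (r * s) x = bm_l r (bm_l s x);
  bm_rD : forall r (x y : bm_car), bm_r (x + y) r = bm_r x r + bm_r y r;
  bm_Dr : forall r s (x : bm_car), bm_r x (r + s) = bm_r x r + bm_r x s;
  bm_rM : forall r s (x : bm_car), bm_r x (r * s) = bm_r (bm_r x r) s;
  bm_lr : forall r s (x : bm_car), bm_l r (bm_r x s) = bm_r (bm_l r x) s }.

Section Tensors.
Variable R : pzRingType.

Definition unital_bimod (M : bimod R) :=
  (forall x : M, bm_l 1 x = x) /\ (forall x : M, bm_r x 1 = x).

(* Formal Z-linear combinations of elementary tensors x_1 (x) ... (x) x_n,
   an elementary tensor being represented by the sequence [:: x_1; ...; x_n]. *)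
Definition fsum (M : bimod R) (A : zmodType) (f : seq M -> A)
  (u : seq (int * seq M)) : A := \sum_(c <- u) f c.2 *~ c.1.

Definition deg (M : bimod R) (n : nat) (u : seq (int * seq M)) :=
  forall c, c \in u -> size c.2 = n.

Definition multibal (M : bimod R) (n : nat) (A : zmodType) (f : seq M -> A) :=
  (forall (xs : seq M) j (a b : M), size xs = n -> (j < n)%N ->
     f (set_nth 0 xs j (a + b)) = f (set_nth 0 xs j a) + f (set_nth 0 xs j b)) /\
  (forall (xs : seq M) j r, size xs = n -> (j.+1 < n)%N ->
     f (set_nth 0 xs j (bm_r (nth 0 xs j) r))
     = f (set_nth 0 xs j.+1 (bm_l r (nth 0 xs j.+1)))).

(* Equality in the tensor power M^{(x) n} = M (x)_R ... (x)_R M (n >= 1) of the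
   elements represented by the formal combinations u and v (universal property
   of the tensor product). *)
Definition teq (M : bimod R) (n : nat) (u v : seq (int * seq M)) :=
  forall (A : zmodType) (f : seq M -> A), multibal n f -> fsum f u = fsum f v.

Definition ract_seq (M : bimod R) (xs : seq M) (r : R) : seq M :=
  if xs is y :: ys then rcons (belast y ys) (bm_r (last y ys) r) else [::].

Variables P Q : bimod R.
Variable psi : P -> Q -> R.

(* psi : P (x)_R Q -> R is an R-bimodule map (given on elementary tensors) *)
Definition is_system :=
  [/\ forall (p p' : P) (q : Q), psi (p + p') q = psi p q + psi p' q,
      forall (p : P) (q q' : Q), psi p (q + q') = psi p q + psi p q',
      forall (p : P) r (q : Q), psi (bm_r p r) q = psi p (bm_l r q),
      forall r (p : P) (q : Q), psi (bm_l r p) q = r * psi p q &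
      forall (p : P) (q : Q) r, psi p (bm_r q r) = psi p q * r].

(* Condition (FS'): the identities of Q and P are Z-combinations of the maps
   theta_{q,p} : x |-> q psi(p (x) x) and theta_{p,q} : y |-> psi(y (x) q) p. *)
Definition FS' :=
  (exists l : seq (int * Q * P),
     forall x : Q, \sum_(k <- l) bm_r k.1.2 (psi k.2 x) *~ k.1.1 = x) /\
  (exists l : seq (int * P * Q),
     forall y : P, \sum_(k <- l) bm_l (psi y k.2) k.1.2 *~ k.1.1 = y).

(* psi_n on elementary tensors p_1(x)..(x)p_n and x_1(x)..(x)x_n:
   psi_n = psi(p_1 psi_{n-1}(p_2..p_n, x_1..x_{n-1}) (x) x_n). *)
Fixpoint psi_aux (ps : seq P) (rxs : seq Q) : R :=
  match ps, rxs with
  | [:: p], [:: x] => psi p x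
  | p :: ps', x :: rxs' => psi (bm_r p (psi_aux ps' rxs')) x
  | _, _ => 0
  end.
Definition psi_n (ps : seq P) (xs : seq Q) : R := psi_aux ps (rev xs).

Definition psiF (p : seq (int * seq P)) (x : seq (int * seq Q)) : R :=
  \sum_(a <- p) \sum_(b <- x) psi_n a.2 b.2 *~ (a.1 * b.1).

Definition thetaF (q : seq (int * seq Q)) (p : seq (int * seq P))
  (x : seq (int * seq Q)) : seq (int * seq Q) :=
  [seq (c.1, ract_seq c.2 (psiF p x)) | c <- q].

Definition famF (fam : seq (int * seq (int * seq Q) * seq (int * seq P)))
  (x : seq (int * seq Q)) : seq (int * seq Q) :=
  flatten [seq [seq (k.1.1 * c.1, c.2) | c <- thetaF k.1.2 k.2 x] | k <- fam].

(* Covariant representations and ring homomorphisms (not necessarily unital). *)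
Definition ringhom (C D : pzRingType) (f : C -> D) :=
  (forall x y, f (x - y) = f x - f y) /\ (forall x y, f (x * y) = f x * f y).

Definition covrep (C : pzRingType) (sg : R -> C) (S : P -> C) (T : Q -> C) :=
  [/\ ringhom sg,
      (forall p p' : P, S (p - p') = S p - S p') /\ (forall q q' : Q, T (q - q') = T q - T q'),
      (forall (p : P) r, S (bm_r p r) = S p * sg r) /\ (forall r (p : P), S (bm_l r p) = sg r * S p),
      (forall (q : Q) r, T (bm_r q r) = T q * sg r) /\ (forall r (q : Q), T (bm_l r q) = sg r * T q) &
      forall (p : P) (q : Q), sg (psi p q) = S p * T q].

(* (sig, S, T, B) is the universal covariant representation (Toeplitz ring). *)
Definition toeplitz (B : pzRingType) (sig : R -> B) (S : P -> B) (T : Q -> B) :=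
  covrep sig S T /\
  forall (C : pzRingType) (sg : R -> C) (S' : P -> C) (T' : Q -> C),
    covrep sg S' T' ->
    (exists phi : B -> C, [/\ ringhom phi, forall r, phi (sig r) = sg r,
        forall p, phi (S p) = S' p & forall q, phi (T q) = T' q]) /\
    (forall phi1 phi2 : B -> C,
        [/\ ringhom phi1, forall r, phi1 (sig r) = sg r,
            forall p, phi1 (S p) = S' p & forall q, phi1 (T q) = T' q] ->
        [/\ ringhom phi2, forall r, phi2 (sig r) = sg r,
            forall p, phi2 (S p) = S' p & forall q, phi2 (T q) = T' q] ->
        forall b, phi1 b = phi2 b).

Variable B : pzRingType.
Variable sig : R -> B.
Variable S : P -> B.
Variable T : Q -> B.

Definition TQ (u : seq (int * seq Q)) : B := \sum_(c <- u) (\prod_(x <- c.2) T x) *~ c.1.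
Definition SP (u : seq (int * seq P)) : B := \sum_(c <- u) (\prod_(y <- c.2) S y) *~ c.1.

(* e = epsilon_i: for i = 0, sig 1; for i > 0, e = pi(id_{Q^{(x) i}}) computed
   from any expression id = sum_k n_k theta_{q_k,p_k} with q_k in Q^{(x) i},
   p_k in P^{(x) i}. *)
Definition is_eps (i : nat) (e : B) :=
  if i is 0 then e = sig 1 else
  exists fam : seq (int * seq (int * seq Q) * seq (int * seq P)),
    [/\ forall k, k \in fam -> deg i k.1.2 /\ deg i k.2,
        forall x, deg i x -> teq i (famF fam x) x &
        e = \sum_(k <- fam) (TQ k.1.2 * SP k.2) *~ k.1.1].

(* c is iota_Q^m(q) for some q in Q^{(x) m} (Q^{(x) 0} = R, iota^0 = sig) *)
Definition imQ (m : nat) (c : B) :=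
  (m = 0%N /\ exists r, c = sig r) \/ ((0 < m)%N /\ exists u, deg m u /\ c = TQ u).
Definition imP (n : nat) (d : B) :=
  (n = 0%N /\ exists r, d = sig r) \/ ((0 < n)%N /\ exists u, deg n u /\ d = SP u).

(* generators of the graded piece T_i *)
Definition gen (i : int) (b : B) :=
  exists (m n : nat) (c d : B), [/\ m%:Z - n%:Z = i, imQ m c, imP n d &
     (b = c * d \/ exists r, b = sig r * c * d)].

Definition span (G : B -> Prop) (x : B) :=
  exists l : seq (int * B), (forall k, k \in l -> G k.2) /\ x = \sum_(k <- l) k.2 *~ k.1.

Definition inT (i : int) := span (gen i).
Definition prodT (i : int) :=
  span (fun b => exists s t, [/\ inT i s, inT (- i) t & b = s * t]).

End Tensors.

(* Everything happens inside the image of a covariant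
   representation (sig, S, T). Words.  A "contraction" pairs innermost factors with psi,
      so S^n(p) sig(r) T^m(q) is again a monomial sig(r') T(q') S(p') of
      degree m - n.  Hence monomials of degree a span the graded piece T_a
      and T_a T_b is contained in T_(a+b); this gives that T_i T_{-i} is an
      ideal of T_0.
   2. Left identity.  The Q-half of (FS'), iterated, expresses the identity
      of Q^{(x) i} as sum n theta_{q,p} (so epsilon_i exists).  Evaluating any
      such expression on the multibalanced map T^i shows epsilon_i T^i(x) =
      T^i(x), hence epsilon_i fixes every monomial of degree i.
   3. Right identity.  The P-half of (FS') yields an element epsP i with
      S^i(p) epsP i = S^i(p); comparing epsilon_i epsP i in two ways shows
      epsilon_i = epsP i, so epsilon_i fixes monomials of degree -i on the right. *)

From Pilot Require Import Defs.
From HB Require Import structures.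
From mathcomp Require Import all_boot all_order all_algebra.
From mathcomp Require Import zify.
Set Implicit Arguments. Unset Strict Implicit.
Import GRing.Theory.
Local Open Scope ring_scope.
(* vector.v also defines a span; we mean the additive span of Defs *)
Local Notation span := Defs.span.

Lemma additive_sum (U V : zmodType) (h : U -> V) :
  (forall a b, h (a + b) = h a + h b) ->
  forall (I : Type) (l : seq I) (g : I -> U) (z : I -> int),
  h (\sum_(k <- l) g k *~ z k) = \sum_(k <- l) h (g k) *~ z k.
Proof.
move=> hD; have h0 : h 0 = 0 by apply: (addIr (h 0)); rewrite -hD !add0r.
have hN a : h (- a) = - h a by apply: (addrI (h a)); rewrite -hD !subrr.
have hMn a n : h (a *+ n) = h a *+ n.
  by elim: n => [|n IH]; rewrite ?mulr0n // !mulrS hD IH.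
have hMz a z : h (a *~ z) = h a *~ z.
  by case: z => n; rewrite ?NegzE ?mulrNz ?hN -!pmulrn hMn.
move=> I; elim=> [|k l IH] g z; first by rewrite !big_nil.
by rewrite !big_cons hD hMz IH.
Qed.

(* The covariance axioms are stated with subtraction; they imply additivity. *)
Lemma additive_of_sub (U V : zmodType) (h : U -> V) :
  (forall a b, h (a - b) = h a - h b) -> forall a b, h (a + b) = h a + h b.
Proof.
move=> hB; have h0 : h 0 = 0 by rewrite -(subrr 0) hB subrr.
have hN a : h (- a) = - h a by rewrite -sub0r hB h0 sub0r.
by move=> a b; have := hB a (- b); rewrite opprK => ->; rewrite hN opprK.
Qed.

Section Span.
Variable B : pzRingType.
Implicit Types (G : B -> Prop) (x y e : B).

Lemma span_gen G x : G x -> span G x.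
Proof.
by exists [:: (1%Z, x)]; split; [move=> k /[1!inE] /eqP -> | rewrite big_seq1].
Qed.

Lemma span_sum G (I : eqType) (l : seq I) (g : I -> B) (z : I -> int) :
  (forall k, k \in l -> span G (g k)) -> span G (\sum_(k <- l) g k *~ z k).
Proof.
elim: l => [|k l IH] Hl; first by exists [::]; split=> //; rewrite !big_nil.
rewrite big_cons; have [lk [Gk ->]] : span G (g k) by apply: Hl; rewrite inE eqxx.
have [lr [Gr ->]] : span G (\sum_(k <- l) g k *~ z k).
  by apply: IH => k' Hk'; apply: Hl; rewrite inE Hk' orbT.
exists ([seq (c.1 * z k, c.2) | c <- lk] ++ lr); split.
  by move=> c; rewrite mem_cat => /orP [/mapP [c' /Gk ? ->] | /Gr].
rewrite big_cat big_map mulrz_suml /=; congr (_ + _).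
by apply: eq_bigr => c _; rewrite mulrzA.
Qed.

Lemma span_sub G x y : span G x -> span G y -> span G (x - y).
Proof.
move=> [lx [Gx ->]] [ly [Gy ->]].
exists (lx ++ [seq (- c.1, c.2) | c <- ly]); split.
  by move=> c; rewrite mem_cat => /orP [/Gx | /mapP [c' /Gy ? ->]].
by rewrite big_cat big_map -sumrN; congr (_ + _); apply: eq_bigr => c _; rewrite mulrNz.
Qed.

Lemma span_span G1 G2 x : (forall g, G1 g -> span G2 g) -> span G1 x -> span G2 x.
Proof. by move=> H [l [Hl ->]]; apply: span_sum => k /Hl; apply: H. Qed.

Lemma span_mul G1 G2 G3 x y :
  (forall g h, G1 g -> G2 h -> span G3 (g * h)) ->
  span G1 x -> span G2 y -> span G3 (x * y).
Proof.
move=> H [l1 [H1 ->]] [l2 [H2 ->]].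
rewrite mulr_suml; under eq_bigr => k _ do rewrite mulrzAl mulr_sumr.
apply: span_sum => k Hk; under eq_bigr => k' _ do rewrite mulrzAr.
by apply: span_sum => k' Hk'; apply: H; [apply: H1 | apply: H2].
Qed.

Lemma span_idl G e x : (forall g, G g -> e * g = g) -> span G x -> e * x = x.
Proof.
move=> H [l [Hl ->]]; rewrite mulr_sumr; apply: eq_big_seq => k Hk.
by rewrite mulrzAr H //; apply: Hl.
Qed.

Lemma span_idr G e x : (forall g, G g -> g * e = g) -> span G x -> x * e = x.
Proof.
move=> H [l [Hl ->]]; rewrite mulr_suml; apply: eq_big_seq => k Hk.
by rewrite mulrzAl H //; apply: Hl.
Qed.
End Span.

Lemma set_nth_rcons_lt (X : Type) (x0 : X) s y j a :
  (j < size s)%N -> set_nth x0 (rcons s y) j a = rcons (set_nth x0 s j a) y.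
Proof. by elim: s j => [|z s IH] [|j] //= H; rewrite IH. Qed.

Lemma set_nth_rcons_eq (X : Type) (x0 : X) s y a :
  set_nth x0 (rcons s y) (size s) a = rcons s a.
Proof. by elim: s => [|z s IH] //=; rewrite IH. Qed.

Lemma ract_rcons (R : pzRingType) (M : bimod R) (s : seq M) y r :
  ract_seq (rcons s y) r = rcons s (bm_r y r).
Proof. by case: s => [|z s] //=; rewrite belast_rcons last_rcons. Qed.

Lemma size_ract (R : pzRingType) (M : bimod R) (xs : seq M) r :
  size (ract_seq xs r) = size xs.
Proof. by case/lastP: xs => [//|s z]; rewrite ract_rcons !size_rcons. Qed.

Section MultiBalanced.
Variables (R : pzRingType) (M : bimod R) (A : zmodType) (f : seq M -> A).

Lemma multibal_last_add zs :
  multibal (size zs).+1 f ->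
  forall a b, f (rcons zs (a + b)) = f (rcons zs a) + f (rcons zs b).
Proof.
move=> [Hadd _] a b; have := Hadd (rcons zs 0) (size zs) a b.
by rewrite size_rcons !set_nth_rcons_eq => /(_ erefl (ltnSn _)).
Qed.

Lemma multibal_ract zs r y : zs != [::] -> multibal (size zs).+1 f ->
  f (rcons (ract_seq zs r) y) = f (rcons zs (bm_l r y)).
Proof.
case/lastP: zs => [//|zs z] _ [_ Hbal]; rewrite ract_rcons.
have := Hbal (rcons (rcons zs z) y) (size zs) r.
rewrite !size_rcons => /(_ erefl (ltnSn _)).
rewrite !nth_rcons !size_rcons ltnSn !ltnn !eqxx /=.
rewrite set_nth_rcons_lt ?size_rcons // set_nth_rcons_eq.
by rewrite -(size_rcons zs z) set_nth_rcons_eq.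
Qed.

Lemma multibal_rcons n y : multibal n.+1 f -> multibal n (fun zs => f (rcons zs y)).
Proof.
move=> [H1 H2]; split.
  move=> xs j a b Hs Hj /=; rewrite -!set_nth_rcons_lt ?Hs //.
  by apply: H1; rewrite ?size_rcons ?Hs // ltnS ltnW.
move=> xs j r Hs Hj /=.
have := H2 (rcons xs y) j r; rewrite size_rcons Hs => /(_ erefl).
rewrite !nth_rcons Hs Hj (ltnW Hj) !set_nth_rcons_lt ?Hs ?Hj ?(ltnW Hj) //.
by apply; rewrite ltnS ltnW.
Qed.
End MultiBalanced.

Section IdentityOfQPowers.
Variables (R : pzRingType) (P Q : bimod R) (psi : P -> Q -> R).
Hypothesis Hsys : is_system psi.
Variable l : seq (int * Q * P).
Hypothesis Hl : forall x : Q, \sum_(k <- l) bm_r k.1.2 (psi k.2 x) *~ k.1.1 = x.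

Lemma fs_last_factor (A : zmodType) (f : seq Q -> A) zs y :
  multibal (size zs).+1 f ->
  \sum_(k <- l) f (rcons zs (bm_r k.1.2 (psi k.2 y))) *~ k.1.1 = f (rcons zs y).
Proof.
move=> Hf; transitivity (f (rcons zs (\sum_(k <- l) bm_r k.1.2 (psi k.2 y) *~ k.1.1))).
  by rewrite (additive_sum (multibal_last_add Hf)).
by rewrite Hl.
Qed.

(* Lq i lists triples (n, q, p) with q in Q^{(x) i+1}, p in P^{(x) i+1} such
   that sum n theta_{q,p} is the identity of Q^{(x) i+1}; for i+1 factors it
   is built from the one for i factors by appending one more (FS') term. *)
Fixpoint Lq (i : nat) : seq (int * seq Q * seq P) :=
  match i with
  | 0 => [seq (k.1.1, [:: k.1.2], [:: k.2]) | k <- l]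
  | i'.+1 => [seq (t.1.1 * k.1.1, rcons t.1.2 k.1.2, k.2 :: t.2) | t <- Lq i', k <- l]
  end.

Lemma Lq_size i t : t \in Lq i -> size t.1.2 = i.+1 /\ size t.2 = i.+1.
Proof.
elim: i t => [|i IH] t /=; first by case/mapP => k _ ->.
case/allpairsP => [[t' k] [/= /IH [H1 H2] _ ->]] /=.
by rewrite size_rcons H1 H2.
Qed.

Lemma psi_n_rcons p ps (xs : seq Q) y : ps != [::] -> xs != [::] ->
  psi_n psi (p :: ps) (rcons xs y) = psi (bm_r p (psi_n psi ps xs)) y.
Proof.
rewrite /psi_n rev_rcons; case: ps => [//|p' ps] _ Hx.
by case Hr: (rev xs) => [|z zs] //; move: Hx; rewrite -(revK xs) Hr.
Qed.

Lemma Lq_expand i (A : zmodType) (f : seq Q -> A) xs :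
  multibal i.+1 f -> size xs = i.+1 ->
  \sum_(t <- Lq i) f (ract_seq t.1.2 (psi_n psi t.2 xs)) *~ t.1.1 = f xs.
Proof.
have [_ _ psi_bal _ _] := Hsys.
elim: i A f xs => [|i IH] A f xs Hf Hs.
  case: xs Hs => [|x [|//]] // _; rewrite big_map.
  exact: (fs_last_factor (zs := [::])).
case/lastP: xs Hs => [//|xs y]; rewrite size_rcons => -[Hs].
rewrite big_allpairs_dep /= -(IH _ _ xs (multibal_rcons y Hf) Hs).
apply: eq_big_seq => -[[n qs] ps] /Lq_size /= [Hq Hp].
have qs_ne0 : qs != [::] by rewrite -size_eq0 Hq.
rewrite multibal_ract // ?Hq // -(@fs_last_factor _ _ qs (bm_l (psi_n psi ps xs) y)) ?Hq //.
rewrite mulrz_suml; apply: eq_bigr => k _.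
by rewrite ract_rcons psi_n_rcons -?size_eq0 ?Hp ?Hs // psi_bal mulrzA_C.
Qed.

Definition famL i := [seq (t.1.1, [:: (1%Z, t.1.2)], [:: (1%Z, t.2)]) | t <- Lq i].

Lemma famL_id i x : deg i.+1 x -> teq i.+1 (famF psi (famL i) x) x.
Proof.
move=> Hx A f Hf.
rewrite /fsum /famF big_flatten /= big_map.
transitivity (\sum_(t <- Lq i)
   f (ract_seq t.1.2 (\sum_(b <- x) psi_n psi t.2 b.2 *~ b.1)) *~ t.1.1).
  rewrite big_map; apply: eq_bigr => t _ /=.
  rewrite big_seq1 /= mulr1 /psiF big_seq1 /=.
  by under eq_bigr do rewrite mul1r.
(* r |-> f(q r) is additive since f is additive in the last factor *)
transitivity (\sum_(t <- Lq i)
   (\sum_(b <- x) f (ract_seq t.1.2 (psi_n psi t.2 b.2)) *~ b.1) *~ t.1.1).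
  apply: eq_big_seq => -[[n qs] ps] /Lq_size /= [Hq _]; congr (_ *~ _).
  case/lastP: qs Hq => [//|zs z]; rewrite size_rcons => -[Hzs].
  under [in RHS]eq_bigr do rewrite ract_rcons.
  have hD a b : f (rcons zs (bm_r z (a + b)))
                = f (rcons zs (bm_r z a)) + f (rcons zs (bm_r z b)).
    by rewrite bm_Dr multibal_last_add ?Hzs.
  by rewrite ract_rcons (additive_sum hD).
rewrite (eq_bigr (fun t => \sum_(b <- x)
   f (ract_seq t.1.2 (psi_n psi t.2 b.2)) *~ b.1 *~ t.1.1)); last first.
  by move=> t _; rewrite mulrz_suml.
rewrite exchange_big /=; apply: eq_big_seq => b Hb.
under eq_bigr do rewrite mulrzAC.
by rewrite -mulrz_suml Lq_expand // Hx.
Qed.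
End IdentityOfQPowers.

Section CovariantRepresentation.
Variables (R : pzRingType) (P Q : bimod R) (psi : P -> Q -> R).
Variables (B : pzRingType) (sig : R -> B) (S : P -> B) (T : Q -> B).
Hypothesis Hcov : covrep psi sig S T.
Hypotheses (HP : unital_bimod P) (HQ : unital_bimod Q).

Lemma sig_sub x y : sig (x - y) = sig x - sig y. Proof. by case: Hcov => [[]]. Qed.
Lemma sig_mul x y : sig (x * y) = sig x * sig y. Proof. by case: Hcov => [[]]. Qed.
Lemma S_sub p p' : S (p - p') = S p - S p'. Proof. by case: Hcov => _ [H _]. Qed.
Lemma S_actr p r : S (bm_r p r) = S p * sig r. Proof. by case: Hcov => _ _ [H _]. Qed.
Lemma S_actl r p : S (bm_l r p) = sig r * S p. Proof. by case: Hcov => _ _ [_ H]. Qed.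
Lemma T_sub q q' : T (q - q') = T q - T q'. Proof. by case: Hcov => _ [_ H]. Qed.
Lemma T_actr q r : T (bm_r q r) = T q * sig r. Proof. by case: Hcov => _ _ _ [H _]. Qed.
Lemma T_actl r q : T (bm_l r q) = sig r * T q. Proof. by case: Hcov => _ _ _ [_ H]. Qed.
Lemma sig_psi p q : sig (psi p q) = S p * T q. Proof. by case: Hcov. Qed.

Definition PT (qs : seq Q) := \prod_(q <- qs) T q.
Definition PS (ps : seq P) := \prod_(p <- ps) S p.

Lemma PT_cat a b : PT (a ++ b) = PT a * PT b. Proof. by rewrite /PT big_cat. Qed.
Lemma PS_cat a b : PS (a ++ b) = PS a * PS b. Proof. by rewrite /PS big_cat. Qed.

Lemma PT_ract qs r : qs != [::] -> PT (ract_seq qs r) = PT qs * sig r.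
Proof. by case/lastP: qs => [//|s z] _; rewrite ract_rcons /PT !big_rcons /= T_actr mulrA. Qed.

Lemma PS_ract ps r : ps != [::] -> PS (ract_seq ps r) = PS ps * sig r.
Proof. by case/lastP: ps => [//|s z] _; rewrite ract_rcons /PS !big_rcons /= S_actr mulrA. Qed.

Lemma sig1_PT qs : qs != [::] -> sig 1 * PT qs = PT qs.
Proof. by case: qs => [//|q qs] _; rewrite /PT big_cons mulrA -T_actl (proj1 HQ). Qed.

Lemma PT_sig1 qs : qs != [::] -> PT qs * sig 1 = PT qs.
Proof. by case/lastP: qs => [//|s z] _; rewrite /PT big_rcons /= -mulrA -T_actr (proj2 HQ). Qed.

Lemma sig1_PS ps : ps != [::] -> sig 1 * PS ps = PS ps.
Proof. by case: ps => [//|p ps] _; rewrite /PS big_cons mulrA -S_actl (proj1 HP). Qed.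

Lemma PS_sig1 ps : ps != [::] -> PS ps * sig 1 = PS ps.
Proof. by case/lastP: ps => [//|s z] _; rewrite /PS big_rcons /= -mulrA -S_actr (proj2 HP). Qed.

Lemma PS_PT_psi ps xs : size ps = size xs -> ps != [::] ->
  PS ps * PT xs = sig (psi_n psi ps xs).
Proof.
elim: ps xs => [//|p ps IH] xs Hs _.
case/lastP: xs Hs => [//|xs x]; rewrite size_rcons => -[Hs].
case: ps IH Hs => [|p' ps'] IH Hs.
  by case: xs Hs => // _; rewrite /psi_n /PS /PT /= !big_seq1 sig_psi.
rewrite psi_n_rcons -?size_eq0 -?Hs // sig_psi S_actr -(IH xs) //.
by rewrite /PS /PT big_cons big_rcons !mulrA.
Qed.

(* T^n is multibalanced, so it factors through Q^{(x) n}. *)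
Lemma PT_multibal n : multibal n PT.
Proof.
have T_add := additive_of_sub T_sub.
split=> [xs j a b Hs Hj | xs j r Hs Hj].
  by rewrite !set_nthE Hs Hj !PT_cat /PT !big_cons T_add mulrDl mulrDr.
rewrite !set_nthE Hs Hj (ltnW Hj).
rewrite (@drop_nth _ 0 j.+1 xs) ?Hs // (@take_nth _ 0 j xs) ?Hs ?(ltnW Hj) //.
rewrite -cats1 !PT_cat /PT !big_cons !big_nil T_actr T_actl.
by rewrite !mulr1 !mulrA.
Qed.

(* Contraction: S^n(p) sig(r) T^m(q) equals a monomial sig(r') T(q') S(p') of
   the same degree m - n, obtained by pairing innermost factors with psi. *)
Lemma contract ps r qs : exists r' qs' ps',
  (size qs')%:Z - (size ps')%:Z = (size qs)%:Z - (size ps)%:Z /\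
  PS ps * sig r * PT qs = sig r' * PT qs' * PS ps'.
Proof.
elim/last_ind: ps r qs => [|ps p IH] r qs.
  by exists r, qs, [::]; rewrite /PS !big_nil mul1r mulr1.
case: qs => [|q qs].
  exists 1, [::], (rcons ps (bm_r p r)); rewrite !size_rcons; split=> //.
  rewrite /PT big_nil !mulr1 sig1_PS -?size_eq0 ?size_rcons //.
  by rewrite /PS !big_rcons /= S_actr mulrA.
have [r' [qs' [ps' [Hd E]]]] := IH (psi (bm_r p r) q) qs.
exists r', qs', ps'; split; first by rewrite Hd size_rcons /=; lia.
by rewrite -E sig_psi S_actr /PS /PT big_rcons big_cons /= !mulrA.
Qed.

Lemma slide_sig r qs r' : exists r'' qs',
  size qs' = size qs /\ sig r * PT qs * sig r' = sig r'' * PT qs'.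
Proof.
case/lastP: qs => [|qs q].
  by exists (r * r'), [::]; rewrite /PT big_nil !mulr1 sig_mul.
exists r, (rcons qs (bm_r q r')); rewrite !size_rcons; split=> //.
by rewrite /PT !big_rcons /= T_actr !mulrA.
Qed.

Definition monomial (a : int) (b : B) :=
  exists r qs ps, (size qs)%:Z - (size ps)%:Z = a /\ b = sig r * PT qs * PS ps.

Lemma monomial_mul a b x y : monomial a x -> monomial b y -> monomial (a + b) (x * y).
Proof.
move=> [r [qs [ps [<- ->]]]] [r' [qs' [ps' [<- ->]]]].
have [r1 [qs1 [ps1 [Hd1 E1]]]] := contract ps r' qs'.
have [r2 [qs2 [Hs2 E2]]] := slide_sig r qs r1.
exists r2, (qs2 ++ qs1), (ps1 ++ ps'); split; first by rewrite !size_cat Hs2; lia.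
have -> : sig r * PT qs * PS ps * (sig r' * PT qs' * PS ps')
        = sig r * PT qs * (PS ps * sig r' * PT qs') * PS ps' by rewrite !mulrA.
by rewrite E1 !mulrA E2 PT_cat PS_cat !mulrA.
Qed.

Lemma span_monomial_mul a b c x y : c = a + b ->
  span (monomial a) x -> span (monomial b) y -> span (monomial c) (x * y).
Proof. by move=> ->; apply: span_mul => g h Hg Hh; apply/span_gen/monomial_mul. Qed.

Lemma monomial_sig r : monomial 0 (sig r).
Proof. by exists r, [::], [::]; rewrite /PT /PS !big_nil !mulr1. Qed.

Lemma monomial_PT qs : qs != [::] -> monomial (size qs) (PT qs).
Proof. by exists 1, qs, [::]; rewrite subr0 /PS big_nil mulr1 sig1_PT. Qed.

Lemma monomial_PS ps : ps != [::] -> monomial (- (size ps)%:Z) (PS ps).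
Proof. by exists 1, [::], ps; rewrite sub0r /PT big_nil mulr1 sig1_PS. Qed.

Lemma imQ_span m c : imQ sig T m c -> span (monomial m) c.
Proof.
case=> [[-> [r ->]]|[m_gt0 [u [Hu ->]]]]; first exact/span_gen/monomial_sig.
rewrite /TQ; apply: span_sum => w Hw; apply: span_gen; rewrite -(Hu w Hw).
by apply: monomial_PT; rewrite -size_eq0 (Hu w Hw) -lt0n.
Qed.

Lemma imP_span n d : imP sig S n d -> span (monomial (- n%:Z)) d.
Proof.
case=> [[-> [r ->]]|[n_gt0 [u [Hu ->]]]]; first exact/span_gen/monomial_sig.
rewrite /SP; apply: span_sum => w Hw; apply: span_gen; rewrite -(Hu w Hw).
by apply: monomial_PS; rewrite -size_eq0 (Hu w Hw) -lt0n.
Qed.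

Lemma gen_span a b : gen sig S T a b -> span (monomial a) b.
Proof.
move=> [m [n [c [d [<- /imQ_span Hc /imP_span Hd [->|[r ->]]]]]]].
  exact: span_monomial_mul Hc Hd.
apply: span_monomial_mul _ Hd => //.
by apply: (span_monomial_mul (a := 0)) Hc; [rewrite add0r | exact/span_gen/monomial_sig].
Qed.

Definition iotaQ (qs : seq Q) := if qs is [::] then sig 1 else TQ T [:: (1%Z, qs)].
Definition iotaP (ps : seq P) := if ps is [::] then sig 1 else SP S [:: (1%Z, ps)].

(* iota_Q and iota_P differ from T^m, S^n only in how sig 1 is absorbed *)
Lemma iotaQ_im qs : imQ sig T (size qs) (iotaQ qs).
Proof.
case: qs => [|q qs]; [left | right]; split=> //; first by exists 1.
by exists [:: (1%Z, q :: qs)]; split=> // c /[1!inE] /eqP ->.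
Qed.

Lemma iotaP_im ps : imP sig S (size ps) (iotaP ps).
Proof.
case: ps => [|p ps]; [left | right]; split=> //; first by exists 1.
by exists [:: (1%Z, p :: ps)]; split=> // c /[1!inE] /eqP ->.
Qed.

Lemma sig_iotaQ r qs : sig r * iotaQ qs = sig r * PT qs.
Proof.
case: qs => [|q qs] /=; last by rewrite /TQ big_seq1 mulr1z.
by rewrite -sig_mul /PT big_nil !mulr1.
Qed.

Lemma iotaQ_sig1 qs : iotaQ qs * sig 1 = iotaQ qs.
Proof.
case: qs => [|q qs] /=; last by rewrite /TQ big_seq1 mulr1z PT_sig1.
by rewrite -sig_mul mulr1.
Qed.

Lemma iotaP_PS x ps : x * sig 1 = x -> x * iotaP ps = x * PS ps.
Proof.
case: ps => [|p ps] x1 /=; last by rewrite /SP big_seq1 mulr1z.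
by rewrite x1 /PS big_nil mulr1.
Qed.

Lemma monomial_gen a b : monomial a b -> gen sig S T a b.
Proof.
move=> [r [qs [ps [<- ->]]]].
exists (size qs), (size ps), (iotaQ qs), (iotaP ps).
split=> //; [exact: iotaQ_im | exact: iotaP_im | right; exists r].
rewrite iotaP_PS; first by rewrite sig_iotaQ.
by rewrite -mulrA iotaQ_sig1.
Qed.

Lemma inT_span a x : inT sig S T a x <-> span (monomial a) x.
Proof.
split=> Hx; apply: span_span Hx => b; first exact: gen_span.
by move=> /monomial_gen /span_gen.
Qed.

Lemma inT_mul a b s t :
  inT sig S T a s -> inT sig S T b t -> inT sig S T (a + b) (s * t).
Proof.
by move=> /inT_span Hs /inT_span Ht; apply/inT_span; apply: span_monomial_mul Hs Ht.
Qed.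

Lemma TQ_inT m u : (0 < m)%N -> deg m u -> inT sig S T m (TQ T u).
Proof. by move=> m_gt0 Hu; apply/inT_span/imQ_span; right; split=> //; exists u. Qed.

Lemma SP_inT n u : (0 < n)%N -> deg n u -> inT sig S T (- n%:Z) (SP S u).
Proof. by move=> n_gt0 Hu; apply/inT_span/imP_span; right; split=> //; exists u. Qed.

Lemma prodT_inT0 i x : prodT sig S T i x -> inT sig S T 0 x.
Proof.
move=> Hx; apply/inT_span; apply: span_span Hx => _ [s [t [Hs Ht ->]]].
by apply/inT_span; rewrite -(subrr i); apply: inT_mul.
Qed.

Lemma prodT_ideal i a x : inT sig S T 0 a -> prodT sig S T i x ->
  prodT sig S T i (a * x) /\ prodT sig S T i (x * a).
Proof.
move=> Ha Hx; split.
  apply: (span_mul (G1 := eq a) _ (span_gen (erefl a)) Hx) => _ _ <- [s [t [Hs Ht ->]]].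
  apply: span_gen; exists (a * s), t; split=> //; last by rewrite mulrA.
  by rewrite -(add0r i); apply: inT_mul.
apply: (span_mul (G2 := eq a) _ Hx (span_gen (erefl a))) => _ _ [s [t [Hs Ht ->]]] <-.
apply: span_gen; exists s, (t * a); split=> //; last by rewrite mulrA.
by rewrite -(addr0 (- i)); apply: inT_mul.
Qed.

Lemma prodT_id i e x :
  (forall s, inT sig S T i s -> e * s = s) ->
  (forall t, inT sig S T (- i) t -> t * e = t) ->
  prodT sig S T i x -> e * x = x /\ x * e = x.
Proof.
move=> He_l He_r Hx; split.
  by apply: (span_idl _ Hx) => _ [s [t [Hs Ht ->]]]; rewrite mulrA He_l.
by apply: (span_idr _ Hx) => _ [s [t [Hs Ht ->]]]; rewrite -mulrA He_r.
Qed.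

Lemma SP_PT n u xs : (0 < n)%N -> deg n u -> size xs = n ->
  SP S u * PT xs = sig (psiF psi u [:: (1%Z, xs)]).
Proof.
move=> n_gt0 Hu Hs; rewrite /psiF.
under eq_bigr => a _ do rewrite big_seq1 /= mulr1.
rewrite (additive_sum (additive_of_sub sig_sub)) /SP mulr_suml.
apply: eq_big_seq => a Ha; rewrite mulrzAl PS_PT_psi ?(Hu a Ha) //.
by rewrite -size_eq0 (Hu a Ha) -lt0n.
Qed.

Lemma TQ_sig n u r : (0 < n)%N -> deg n u ->
  TQ T u * sig r = \sum_(c <- u) PT (ract_seq c.2 r) *~ c.1.
Proof.
move=> n_gt0 Hu; rewrite /TQ mulr_suml; apply: eq_big_seq => c Hc.
by rewrite mulrzAl PT_ract // -size_eq0 (Hu c Hc) -lt0n.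
Qed.

Variable l' : seq (int * P * Q).
Hypothesis Hl' : forall y : P, \sum_(k <- l') bm_l (psi y k.2) k.1.2 *~ k.1.1 = y.

(* EL i lists triples (n, q, p), q in Q^{(x) i}, p in P^{(x) i}, such that
   sum n theta_{p,q} is the identity of P^{(x) i}; it is built from the P-half
   of (FS').  epsP i = sum n T^i(q) S^i(p) is the resulting candidate for
   epsilon_i, which acts as a right identity on S^i(P^{(x) i}). *)
Fixpoint EL (i : nat) : seq (int * seq Q * seq P) :=
  match i with
  | 0 => [:: (1%Z, [::], [::])]
  | i'.+1 => [seq (k.1.1 * t.1.1, k.2 :: t.1.2, rcons t.2 k.1.2) | k <- l', t <- EL i']
  end.

Definition epsP i := \sum_(t <- EL i) (PT t.1.2 * PS t.2) *~ t.1.1.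

Lemma EL_size i t : t \in EL i -> size t.1.2 = i /\ size t.2 = i.
Proof.
elim: i t => [|i IH] t /=; first by rewrite inE => /eqP ->.
case/allpairsP => [[k t'] [_ /= /IH [H1 H2] ->]] /=.
by rewrite size_rcons H1 H2.
Qed.

Lemma epsP0 : epsP 0 = 1.
Proof. by rewrite /epsP big_seq1 /PT /PS !big_nil mulr1 mulr1z. Qed.

Lemma S_fs y : S y = \sum_(k <- l') (sig (psi y k.2) * S k.1.2) *~ k.1.1.
Proof.
rewrite -{1}(Hl' y) (additive_sum (additive_of_sub S_sub)).
by apply: eq_bigr => k _; rewrite S_actl.
Qed.

(* epsP i is a right identity on S^i(P^{(x) i}): peel off the last factor
   of p and absorb it with the P-half of (FS'). *)
Lemma PS_epsP i ps : size ps = i -> PS ps * epsP i = PS ps.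
Proof.
elim: i ps => [|i IH] ps Hs; first by case: ps Hs => // _; rewrite epsP0 mulr1.
case/lastP: ps Hs => [//|ps y]; rewrite size_rcons => -[Hs].
have PS_sig_epsP r : PS ps * sig r * epsP i = PS ps * sig r.
  case: ps Hs IH => [<- _ | p ps Hs IH]; first by rewrite epsP0 mulr1.
  by rewrite -PS_ract // IH // size_ract.
rewrite /PS big_rcons /= -/(PS ps) [in RHS]S_fs mulr_sumr.
rewrite /epsP big_allpairs_dep /= mulr_sumr; apply: eq_bigr => k _.
transitivity ((PS ps * sig (psi y k.2) * epsP i * S k.1.2) *~ k.1.1).
  rewrite sig_psi /epsP !mulr_sumr mulr_suml mulrz_suml.
  apply: eq_bigr => t _; rewrite !mulrzAr !mulrzAl -mulrzA_C; congr (_ *~ _ *~ _).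
  by rewrite /PS /PT !big_rcons big_cons /= !mulrA.
by rewrite PS_sig_epsP mulrzAr mulrA.
Qed.

Definition epsF (fam : seq (int * seq (int * seq Q) * seq (int * seq P))) :=
  \sum_(k <- fam) (TQ T k.1.2 * SP S k.2) *~ k.1.1.

Section Epsilon.
Variables (i : nat) (fam : seq (int * seq (int * seq Q) * seq (int * seq P))).
Hypothesis i_gt0 : (0 < i)%N.
Hypothesis fam_deg : forall k, k \in fam -> deg i k.1.2 /\ deg i k.2.
Hypothesis fam_id : forall x, deg i x -> teq i (famF psi fam x) x.

(* Testing fam_id against the multibalanced map T^i: epsF fam is a left
   identity on T^i(Q^{(x) i}). *)
Lemma epsF_PT xs : size xs = i -> epsF fam * PT xs = PT xs.
Proof.
move=> Hs; have Hx : deg i [:: (1%Z, xs)] by move=> c /[1!inE] /eqP ->.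
have := fam_id Hx (PT_multibal i); rewrite /fsum big_seq1 /= mulr1z => {2}<-.
rewrite /famF big_flatten /= big_map /epsF mulr_suml; apply: eq_big_seq => k Hk.
have [Hq Hp] := fam_deg Hk.
rewrite big_map /thetaF big_map /= mulrzAl -mulrA (SP_PT i_gt0 Hp Hs).
rewrite (TQ_sig _ i_gt0 Hq) mulrz_suml.
by apply: eq_bigr => c _; rewrite mulrzA_C.
Qed.

(* epsF fam does not depend on the chosen expression of the identity:
   it equals epsP i, hence is also a right identity on S^i(P^{(x) i}). *)
Lemma epsF_epsP : epsF fam = epsP i.
Proof.
have epsF_fixes_epsP : epsF fam * epsP i = epsP i.
  rewrite /epsP mulr_sumr; apply: eq_big_seq => t Ht.
  by rewrite mulrzAr mulrA epsF_PT // (EL_size Ht).1.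
have epsP_fixes_epsF : epsF fam * epsP i = epsF fam.
  rewrite /epsF mulr_suml; apply: eq_big_seq => k Hk.
  rewrite mulrzAl -mulrA; congr (_ * _ *~ _).
  rewrite /SP mulr_suml; apply: eq_big_seq => a Ha.
  by rewrite mulrzAl PS_epsP // (proj2 (fam_deg Hk) a Ha).
by rewrite -epsP_fixes_epsF epsF_fixes_epsP.
Qed.

Lemma epsF_monomial_l b : monomial i b -> epsF fam * b = b.
Proof.
move=> [r [[|q qs] [ps [Hd ->]]]]; first by move: i_gt0 Hd => /=; lia.
have -> : sig r * PT (q :: qs) = PT (bm_l r q :: qs) by rewrite /PT !big_cons T_actl mulrA.
have Hi : (i <= size (bm_l r q :: qs))%N by move: Hd => /=; lia.
by rewrite -(cat_take_drop i (bm_l r q :: qs)) PT_cat !mulrA epsF_PT // size_takel.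
Qed.

Lemma epsF_monomial_r b : monomial (- i%:Z) b -> b * epsF fam = b.
Proof.
move=> [r [qs [ps [Hd ->]]]].
have Hk : size (drop (size ps - i) ps) = i by rewrite size_drop; lia.
by rewrite -(cat_take_drop (size ps - i) ps) PS_cat -!mulrA epsF_epsP PS_epsP.
Qed.
End Epsilon.

Lemma is_eps_idl i e : is_eps psi sig S T i e -> forall s, inT sig S T i s -> e * s = s.
Proof.
move=> He s /inT_span; apply: span_idl => b; case: i He => [|i] /= He.
  by move=> [r [qs [ps [_ ->]]]]; rewrite He !mulrA -sig_mul mul1r.
by case: He => fam [Hd Ht ->]; apply: epsF_monomial_l.
Qed.

Lemma is_eps_idr i e : is_eps psi sig S T i e -> forall t, inT sig S T (- i%:Z) t -> t * e = t.
Proof.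
move=> He t /inT_span; apply: span_idr => b; case: i He => [|i] /= He; last first.
  by case: He => fam [Hd Ht ->]; apply: epsF_monomial_r.
move=> [r [qs [[|p ps] [Hd ->]]]]; last by rewrite He -mulrA PS_sig1.
have -> : qs = [::] by apply/eqP; rewrite -size_eq0; move: Hd => /=; lia.
by rewrite He /PT /PS !big_nil !mulr1 -sig_mul mulr1.
Qed.

Lemma is_eps_prodT i e : is_eps psi sig S T i e -> prodT sig S T i e.
Proof.
case: i => [|i] /= He.
  apply: span_gen; exists (sig 1), (sig 1); rewrite He -sig_mul mulr1.
  by split=> //; apply/inT_span/span_gen/monomial_sig.
case: He => fam [Hd _ ->]; apply: span_sum => k Hk; apply: span_gen.
have [Hq Hp] := Hd k Hk.
by exists (TQ T k.1.2), (SP S k.2); split=> //; [apply: TQ_inT | apply: SP_inT].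
Qed.
End CovariantRepresentation.

(* epsilon_0 = sig 1 exists trivially; for i > 0 the family famL (i - 1)
   expresses the identity of Q^{(x) i}. *)
Lemma is_eps_exists (R : pzRingType) (P Q : bimod R) (psi : P -> Q -> R)
  (B : pzRingType) (sig : R -> B) (S : P -> B) (T : Q -> B) (l : seq (int * Q * P)) :
  is_system psi ->
  (forall x : Q, \sum_(k <- l) bm_r k.1.2 (psi k.2 x) *~ k.1.1 = x) ->
  forall i, exists e, is_eps psi sig S T i e.
Proof.
move=> Hsys Hl [|i]; first by exists (sig 1).
eexists; exists (famL l i); split=> //; last exact: famL_id.
move=> k /mapP [t /Lq_size [H1 H2] ->] /=.
by split=> c /[1!inE] /eqP ->.
Qed.

Unset Implicit Arguments.

Theorem mainTheorem10 (R : pzRingType) (P Q : bimod R) (psi : P -> Q -> R)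
  (B : pzRingType) (sig : R -> B) (S : P -> B) (T : Q -> B) :
  unital_bimod P -> unital_bimod Q -> is_system psi -> FS' psi ->
  toeplitz psi sig S T ->
  forall i : nat,
    (exists e, is_eps psi sig S T i e) /\
    (forall e, is_eps psi sig S T i e ->
      (forall s, inT sig S T i%:Z s -> e * s = s) /\
      (forall t, inT sig S T (- i%:Z) t -> t * e = t) /\
      [/\ prodT sig S T i%:Z e,
          forall x, prodT sig S T i%:Z x -> inT sig S T 0 x,
          forall x y, prodT sig S T i%:Z x -> prodT sig S T i%:Z y ->
                      prodT sig S T i%:Z (x - y),
          forall a x, inT sig S T 0 a -> prodT sig S T i%:Z x ->
                      prodT sig S T i%:Z (a * x) /\ prodT sig S T i%:Z (x * a) &
          forall x, prodT sig S T i%:Z x -> e * x = x /\ x * e = x]).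
Proof.
move=> HP HQ Hsys [[l Hl] [l' Hl']] [Hcov _] i.
split; first exact: is_eps_exists Hsys Hl i.
move=> e He.
have Hidl := is_eps_idl Hcov HP HQ He.
have Hidr := is_eps_idr Hcov HP HQ Hl' He.
split=> //; split=> //; split.
- exact: (is_eps_prodT Hcov HP HQ He).
- by move=> x Hx; apply: (prodT_inT0 Hcov HP HQ Hx).
- by move=> x y; apply: span_sub.
- by move=> a x Ha Hx; apply: (prodT_ideal Hcov HP HQ Ha Hx).
- by move=> x; apply: prodT_id.
Qed.
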